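(* Let $k\ge 0$ be an integer. Every maximal simplex $\sigma$ of $\mathrm{VR}(\mathbb{Z}^2;k)$ is of the form $\sigma=B_{\mathbb{R}^2}[c,\tfrac{k}{2}]\cap\mathbb{Z}^2$, where, for some $i,j\in\mathbb{Z}$, $c=(i,j)$ or $c=(i+\tfrac12,j+\tfrac12)$ if $k$ is even, and $c=(i+\tfrac12,j)$ or $c=(i,j+\tfrac12)$ if $k$ is odd.
   Context: $\mathbb{Z}^2$ and $\mathbb{R}^2$ carry the $l^1$ metric $d((x,y),(x',y'))=|x-x'|+|y-y'|$, and $B_{\mathbb{R}^2}[c,r]=\{p\in\mathbb{R}^2: d(p,c)\le r\}$ is the closed $l^1$ ball. $\mathrm{VR}(X;r)$ is the simplicial complex on vertex set $X$ whose simplices are the finite nonempty subsets of diameter at most $r$; a maximal simplex is one not properly contained in another simplex. *)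

From Stdlib Require Import ZArith Reals List.
Open Scope R_scope.

Definition pointZ := (Z * Z)%type.

Definition distZ (p q : pointZ) : Z :=
  (Z.abs (fst p - fst q) + Z.abs (snd p - snd q))%Z.

Definition distR (p q : R * R) : R :=
  Rabs (fst p - fst q) + Rabs (snd p - snd q).

Definition embZ (p : pointZ) : R * R := (IZR (fst p), IZR (snd p)).

Definition closed_ball (c : R * R) (r : R) (x : R * R) : Prop := distR x c <= r.

Definition finite_set (S : pointZ -> Prop) : Prop :=
  exists l : list pointZ, forall p, S p <-> In p l.

Definition VR_simplex (r : R) (S : pointZ -> Prop) : Prop :=
  finite_set S /\ (exists p, S p) /\
  (forall p q, S p -> S q -> IZR (distZ p q) <= r).

Definition VR_maximal_simplex (r : R) (S : pointZ -> Prop) : Prop :=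
  VR_simplex r S /\
  forall T, VR_simplex r T -> (forall p, S p -> T p) -> forall p, T p -> S p.

Definition is_ball_trace (S : pointZ -> Prop) (c : R * R) (r : R) : Prop :=
  forall p : pointZ, S p <-> closed_ball c r (embZ p).

(* In the rotated coordinates u = x + y, v = x - y the l^1 distance on Z^2 becomes
   max(|du|, |dv|).  A simplex of VR(Z^2; k) therefore lies in a box
   a <= u <= a + k, b <= v <= b + k, the lattice points of such a box are pairwise at
   distance at most k, and so a maximal simplex is the whole box.  The box is the
   l^1 ball of radius k/2 around ((a + b + k)/2, (a - b)/2); the two coordinates of
   this centre, doubled, differ by k modulo 2, which gives the possible centres. *)
From Stdlib Require Import ZArith Reals List Lra Lia.
Open Scope R_scope.

Definition diag_box (a b d : Z) (p : pointZ) : Prop :=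
  (a <= fst p + snd p <= a + d /\ b <= fst p - snd p <= b + d)%Z.

Lemma exists_min_in_list {A : Type} (f : A -> Z) (l : list A) : l <> nil ->
  exists q, In q l /\ forall p, In p l -> (f q <= f p)%Z.
Proof.
  induction l as [|x l IH]; intros Hl; [congruence|].
  destruct l as [|y l'].
  - exists x; split; [now left|]. intros p [<-|[]]; lia.
  - destruct IH as [q [Hq Hmin]]; [discriminate|].
    destruct (Z.le_gt_cases (f x) (f q)).
    + exists x; split; [now left|].
      intros p [<-|Hp]; [lia|]. specialize (Hmin p Hp); lia.
    + exists q; split; [now right|]. intros p [<-|Hp]; [lia|auto].
Qed.

Lemma IZR_le_INR_iff (z : Z) (k : nat) : IZR z <= INR k <-> (z <= Z.of_nat k)%Z.
Proof. rewrite INR_IZR_INZ; split; [apply le_IZR|apply IZR_le]. Qed.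

Lemma distZ_le_diag_box (a b d : Z) (p q : pointZ) :
  diag_box a b d p -> diag_box a b d q -> (distZ p q <= d)%Z.
Proof. unfold diag_box, distZ; lia. Qed.

Lemma VR_simplex_in_diag_box (k : nat) (S : pointZ -> Prop) :
  VR_simplex (INR k) S ->
  exists a b, forall p, S p -> diag_box a b (Z.of_nat k) p.
Proof.
  intros [[l Hl] [[p0 Hp0] Hdiam]].
  assert (Hne : l <> nil) by (intros ->; exact (proj1 (Hl p0) Hp0)).
  destruct (exists_min_in_list (fun p => fst p + snd p)%Z l Hne) as [q1 [Hq1 Hmin1]].
  destruct (exists_min_in_list (fun p => fst p - snd p)%Z l Hne) as [q2 [Hq2 Hmin2]].
  exists (fst q1 + snd q1)%Z, (fst q2 - snd q2)%Z; intros p Hp.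
  specialize (Hmin1 p (proj1 (Hl p) Hp)); specialize (Hmin2 p (proj1 (Hl p) Hp)).
  pose proof (proj1 (IZR_le_INR_iff _ _) (Hdiam p q1 Hp (proj2 (Hl q1) Hq1))).
  pose proof (proj1 (IZR_le_INR_iff _ _) (Hdiam p q2 Hp (proj2 (Hl q2) Hq2))).
  unfold diag_box, distZ in *; simpl in *; lia.
Qed.

Lemma VR_simplex_add_point (r : R) (S : pointZ -> Prop) (p : pointZ) :
  VR_simplex r S -> (forall q, S q -> IZR (distZ p q) <= r) ->
  VR_simplex r (fun q => S q \/ q = p).
Proof.
  intros [[l Hl] [[p0 Hp0] Hdiam]] Hp.
  assert (Hdist_sym : forall q, IZR (distZ q p) = IZR (distZ p q))
    by (intros q; unfold distZ; f_equal; lia).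
  split; [|split].
  - exists (p :: l); intros q; simpl; rewrite Hl; intuition congruence.
  - exists p0; now left.
  - intros x y [Hx| ->] [Hy| ->]; auto.
    + rewrite Hdist_sym; auto.
    + specialize (Hp p0 Hp0); specialize (Hdiam p0 p0 Hp0 Hp0).
      unfold distZ in *; rewrite !Z.sub_diag in *; simpl in *; lra.
Qed.

Lemma VR_maximal_simplex_eq_diag_box (k : nat) (S : pointZ -> Prop) :
  VR_maximal_simplex (INR k) S ->
  exists a b, forall p, S p <-> diag_box a b (Z.of_nat k) p.
Proof.
  intros [HS Hmax].
  destruct (VR_simplex_in_diag_box k S HS) as [a [b Hbox]].
  exists a, b; intros p; split; [apply Hbox|intros Hp].
  apply (Hmax (fun q => S q \/ q = p)); [|now left|now right].
  apply VR_simplex_add_point; [exact HS|].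
  intros q Hq; apply IZR_le_INR_iff, (distZ_le_diag_box a b); auto.
Qed.

Lemma Rabs_IZR_sub_half (x n : Z) :
  Rabs (IZR x - IZR n / 2) = IZR (Z.abs (2 * x - n)) / 2.
Proof.
  rewrite abs_IZR, minus_IZR, mult_IZR.
  replace (IZR 2 * IZR x - IZR n) with (2 * (IZR x - IZR n / 2)) by field.
  rewrite Rabs_mult, (Rabs_right 2) by lra; field.
Qed.

Lemma diag_box_ball_trace (a b d : Z) :
  is_ball_trace (diag_box a b d) (IZR (a + b + d) / 2, IZR (a - b) / 2) (IZR d / 2).
Proof.
  intros p; unfold closed_ball, distR, embZ, diag_box; simpl.
  rewrite !Rabs_IZR_sub_half.
  assert (Hhalf : forall m n : Z, IZR m / 2 + IZR n / 2 <= IZR d / 2 <-> (m + n <= d)%Z).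
  { intros m n; split; intros H.
    - apply le_IZR; rewrite plus_IZR; lra.
    - apply IZR_le in H; rewrite plus_IZR in H; lra. }
  rewrite Hhalf; lia.
Qed.

Lemma is_ball_trace_ext (S T : pointZ -> Prop) (c : R * R) (r : R) :
  (forall p, S p <-> T p) -> is_ball_trace T c r -> is_ball_trace S c r.
Proof. intros HST HT p; rewrite HST; apply HT. Qed.

Lemma IZR_half_cases (n : Z) : exists i : Z,
  (Z.even n = true /\ IZR n / 2 = IZR i) \/
  (Z.even n = false /\ IZR n / 2 = IZR i + 1/2).
Proof.
  pose proof (Z.div2_odd n) as Hn; set (h := Z.div2 n) in Hn.
  exists h; rewrite <- Z.negb_odd.
  destruct (Z.odd n); [right|left]; split; auto;
    rewrite Hn, plus_IZR, mult_IZR; simpl; lra.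
Qed.

Lemma Z_even_of_nat (k : nat) : Z.even (Z.of_nat k) = Nat.even k.
Proof.
  induction k as [|k IH]; [reflexivity|].
  rewrite Nat2Z.inj_succ, Z.even_succ, <- Z.negb_even, IH, Nat.even_succ, <- Nat.negb_even.
  reflexivity.
Qed.

Lemma diag_center_parity (a b : Z) (k : nat) :
  Z.even (a + b + Z.of_nat k) = Bool.eqb (Z.even (a - b)) (Nat.even k).
Proof.
  replace (a + b + Z.of_nat k)%Z with ((a - b) + Z.of_nat k + 2 * b)%Z by lia.
  rewrite !Z.even_add, Z.even_mul, Z_even_of_nat.
  destruct (Z.even (a - b)), (Nat.even k); reflexivity.
Qed.

Theorem proposition4p2 (k : nat) (sigma : pointZ -> Prop) :
  VR_maximal_simplex (INR k) sigma ->
  exists i j : Z,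
    if Nat.even k then
      is_ball_trace sigma (IZR i, IZR j) (INR k / 2) \/
      is_ball_trace sigma (IZR i + 1/2, IZR j + 1/2) (INR k / 2)
    else
      is_ball_trace sigma (IZR i + 1/2, IZR j) (INR k / 2) \/
      is_ball_trace sigma (IZR i, IZR j + 1/2) (INR k / 2).
Proof.
  intros Hmax.
  destruct (VR_maximal_simplex_eq_diag_box k sigma Hmax) as [a [b Hbox]].
  assert (Htrace := is_ball_trace_ext _ _ _ _ Hbox
                      (diag_box_ball_trace a b (Z.of_nat k))).
  rewrite <- INR_IZR_INZ in Htrace.
  pose proof (diag_center_parity a b k) as Hparity.
  destruct (IZR_half_cases (a + b + Z.of_nat k)) as [i [[Ei Ci]|[Ei Ci]]];
  destruct (IZR_half_cases (a - b)) as [j [[Ej Cj]|[Ej Cj]]];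
  exists i, j; rewrite Ci, Cj in Htrace; rewrite Ei, Ej in Hparity;
  destruct (Nat.even k); simpl in Hparity; try discriminate; auto.
Qed.
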